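(* Let $f,g\in\mathrm{Diff}(\mathbb{C},0)$ be two holomorphic diffeomorphisms fixing the origin, both distinct from the identity, and let $W(a,b)$ be a non-trivial reduced word in $a,a^{-1},b,b^{-1}$. If there exists a formal series $\hat h\in\widehat{\mathrm{Diff}}(\mathbb{C},0)$ such that $W(f,\hat h^{-1}\circ g\circ\hat h)\neq\mathrm{id}$, then there also exists $h\in\mathrm{Diff}(\mathbb{C},0)$ such that $W(f,h^{-1}\circ g\circ h)\neq\mathrm{id}$. In fact, the set of $h\in\mathrm{Diff}(\mathbb{C},0)$ such that $W(f,h^{-1}\circ g\circ h)\neq\mathrm{id}$ is open and dense for the analytic topology.
   Context: $\mathrm{Diff}(\mathbb{C},0)$ is the group of germs of holomorphic diffeomorphisms of $\mathbb{C}$ fixing $0$; $\widehat{\mathrm{Diff}}(\mathbb{C},0)$ is the group (under composition) of formal series $\sum_{i\ge1}c_ix^i$ with $c_1\neq0$, into which $\mathrm{Diff}(\mathbb{C},0)$ injects via Taylor series at $0$. $W(f,g)$ denotes the element obtained by substituting $a=f$, $a^{-1}=f^{-1}$, $b=g$, $b^{-1}=g^{-1}$ and composing (as germs or formal series). Analytic topology: for $r>0$ and $h$ holomorphic near $0$, $\|h\|_r=\sup_{B(r)}|h|$ if $h$ extends holomorphically to the open disc $B(r)$ of radius $r$, and $+\infty$ otherwise; a basis of open sets of $\mathrm{Diff}(\mathbb{C},0)$ is given by the sets $\{g:\|g-f\|_r<\varepsilon\}$, $f\in\mathrm{Diff}(\mathbb{C},0)$, $r,\varepsilon>0$. *)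

From Stdlib Require Import Reals List ClassicalEpsilon.
From Coquelicot Require Import Coquelicot.
Import ListNotations.
Open Scope R_scope.

Definition fps := nat -> C.

Definition fmul (a b : fps) : fps :=
  fun n => sum_n (fun k => Cmult (a k) (b (n - k)%nat)) n.
Definition fone : fps := fun n => match n with O => RtoC 1 | _ => RtoC 0 end.
Fixpoint fpow (a : fps) (k : nat) : fps :=
  match k with O => fone | S k' => fmul a (fpow a k') end.

(** Composition (a o b), meaningful when b 0 = 0 : (a o b)_n = sum_{k<=n} a_k (b^k)_n. *)
Definition fcomp (a b : fps) : fps :=
  fun n => sum_n (fun k => Cmult (a k) (fpow b k n)) n.

Definition fid : fps := fun n => match n with 1%nat => RtoC 1 | _ => RtoC 0 end.

Definition is_fdiff (a : fps) : Prop := a O = RtoC 0 /\ a 1%nat <> RtoC 0.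

Definition finv (a : fps) : fps :=
  epsilon (inhabits fid)
    (fun b => b O = RtoC 0 /\ fcomp a b = fid /\ fcomp b a = fid).

(** Germs in Diff(C,0), identified with their (convergent) Taylor series at 0
    via the injection Diff(C,0) -> \hat{Diff}(C,0). *)
Definition is_germ (a : fps) : Prop :=
  is_fdiff a /\ exists r, 0 < r /\ ex_series (fun n => Cmod (a n) * r ^ n).

Inductive letter := La | LaInv | Lb | LbInv.
Definition linv (x : letter) : letter :=
  match x with La => LaInv | LaInv => La | Lb => LbInv | LbInv => Lb end.
Fixpoint reduced (w : list letter) : Prop :=
  match w with
  | x :: ((y :: _) as w') => y <> linv x /\ reduced w'
  | _ => True
  end.

Definition lval (f g : fps) (x : letter) : fps :=
  match x with La => f | LaInv => finv f | Lb => g | LbInv => finv g end.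
Definition weval (w : list letter) (f g : fps) : fps :=
  fold_right (fun x acc => fcomp (lval f g x) acc) fid w.

Definition fconj (h g : fps) : fps := fcomp (finv h) (fcomp g h).

(** The germ h (Taylor series h) extends holomorphically
    to B(r) iff its power series converges on B(r); its extension there is the
    sum of the series.  [ext_disc h r] = h extends to B(r). *)
Definition ext_disc (h : fps) (r : R) : Prop :=
  forall z : C, Cmod z < r -> exists l : C, is_series (fun n => Cmult (h n) (pow_n z n)) l.

Definition fsub (a b : fps) : fps := fun n => Cminus (a n) (b n).

(** ||h||_r = sup_{B(r)} |h| (= +oo if h does not extend to B(r)).
    [norm_lt h r eps] <-> ||h||_r < eps. *)
Definition norm_lt (h : fps) (r eps : R) : Prop :=
  ext_disc h r /\
  exists M, M < eps /\
    forall z l, Cmod z < r -> is_series (fun n => Cmult (h n) (pow_n z n)) l -> Cmod l <= M.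

Definition anball (f : fps) (r eps : R) (g : fps) : Prop := norm_lt (fsub g f) r eps.

(** Subsets of Diff(C,0) are predicates (only their germ elements matter). *)
Definition an_open (U : fps -> Prop) : Prop :=
  forall g, is_germ g -> U g ->
    exists f r eps, is_germ f /\ 0 < r /\ 0 < eps /\ anball f r eps g /\
      forall k, is_germ k -> anball f r eps k -> U k.

Definition an_dense (U : fps -> Prop) : Prop :=
  forall V, an_open V -> (exists g, is_germ g /\ V g) ->
    exists g, is_germ g /\ V g /\ U g.

(* The n-th coefficient of W(f, h^-1 g h) is a polynomial in 1/h_1 and finitely many
   coefficients h_1, ..., h_D of h, since inverses and composites of series fixing 0
   are computed degree by degree.  By Cauchy's estimates each coefficient is continuous
   for the analytic topology, so the set of h making the word nontrivial is open.
   For density, move from a germ g0 towards the truncation at degree D of a formal h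
   making the word nontrivial, along the segment g0 + t (trunc h - g0): once the powers
   of 1/h_1 are cleared, the chosen coefficient is a polynomial in t which is nonzero
   at t = 1, hence nonzero for arbitrarily small t, where the perturbed germ is still
   in any given analytic neighbourhood of g0. *)

From Stdlib Require Import Reals List Arith Lia Lra FunctionalExtensionality ClassicalEpsilon Classical.
From Coquelicot Require Import Coquelicot.

(* Goals produced by Coquelicot's generic sums are stated with [plus], [mult] and
   the carrier [Ring.sort C_Ring], where [ring] does not see the field [C]. *)
Ltac C_ring :=
  repeat change (plus ?x ?y) with (Cplus x y);
  repeat change (mult ?x ?y) with (Cmult x y);
  repeat change (@zero _) with (RtoC 0);
  match goal with |- @eq _ ?a ?b => change (@eq C a b); ring end.

Lemma sum_n_zero (u : nat -> C) n :
  (forall k, (k <= n)%nat -> u k = RtoC 0) -> sum_n u n = RtoC 0.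
Proof.
  induction n as [|n IHn]; intros Hu.
  - rewrite sum_O. apply Hu; lia.
  - rewrite sum_Sn, IHn, Hu by (intros; try apply Hu; lia). C_ring.
Qed.

Lemma sum_n_extend_zero (u : nat -> C) n m : (n <= m)%nat ->
  (forall k, (n < k <= m)%nat -> u k = RtoC 0) -> sum_n u m = sum_n u n.
Proof.
  induction m as [|m IHm]; intros Hnm Hu.
  - replace n with 0%nat by lia. reflexivity.
  - destruct (Nat.eq_dec n (S m)) as [->|Hne]; [reflexivity|].
    rewrite sum_Sn, IHm, Hu by (try lia; intros; apply Hu; lia). C_ring.
Qed.

Lemma sum_n_single (u : nat -> C) n i : (i <= n)%nat ->
  (forall k, (k <= n)%nat -> k <> i -> u k = RtoC 0) -> sum_n u n = u i.
Proof.
  intros Hi Hu. rewrite (sum_n_extend_zero u i n Hi) by (intros; apply Hu; lia).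
  destruct i as [|i]; [apply sum_O|].
  rewrite sum_Sn, sum_n_zero by (intros; apply Hu; lia). C_ring.
Qed.

Lemma sum_n_shift (G : nat -> C) i n : (i <= n)%nat ->
  sum_n (fun k => if le_dec i k then G (k - i)%nat else RtoC 0) n = sum_n G (n - i).
Proof.
  induction n as [|n IHn]; intros Hi.
  - replace i with 0%nat by lia. rewrite !sum_O. destruct le_dec; [reflexivity|lia].
  - destruct (Nat.eq_dec i (S n)) as [->|Hne].
    + rewrite sum_Sn, sum_n_zero by (intros k Hk; destruct le_dec; [lia|reflexivity]).
      destruct le_dec; [|lia]. rewrite Nat.sub_diag, sum_O. C_ring.
    + rewrite sum_Sn, IHn by lia. destruct le_dec; [|lia].
      replace (S n - i)%nat with (S (n - i)) by lia. rewrite sum_Sn. reflexivity.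
Qed.

Lemma sum_n_triangle (F : nat -> nat -> C) n :
  sum_n (fun k => sum_n (fun i => F i (k - i)%nat) k) n =
  sum_n (fun i => sum_n (fun j => F i j) (n - i)) n.
Proof.
  transitivity (sum_n (fun k => sum_n (fun i =>
    if le_dec i k then F i (k - i)%nat else RtoC 0) n) n).
  - apply sum_n_ext_loc. intros k Hk.
    rewrite (sum_n_extend_zero _ k n) by (first [lia | intros; destruct le_dec; [lia|reflexivity]]).
    apply sum_n_ext_loc. intros i Hi. destruct le_dec; [reflexivity|lia].
  - rewrite sum_n_switch. apply sum_n_ext_loc. intros i Hi. exact (sum_n_shift (F i) i n Hi).
Qed.

Lemma sum_n_Cmult_l (a : C) (u : nat -> C) n :
  sum_n (fun k => Cmult a (u k)) n = Cmult a (sum_n u n).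
Proof. exact (sum_n_mult_l a u n). Qed.

Lemma sum_n_Cmult_r (a : C) (u : nat -> C) n :
  sum_n (fun k => Cmult (u k) a) n = Cmult (sum_n u n) a.
Proof. exact (sum_n_mult_r a u n). Qed.

Lemma sum_n_Cmult (u v : nat -> C) n m :
  Cmult (sum_n u n) (sum_n v m) = sum_n (fun i => sum_n (fun j => Cmult (u i) (v j)) m) n.
Proof.
  rewrite <- sum_n_Cmult_r. apply sum_n_ext. intros i. rewrite <- sum_n_Cmult_l. reflexivity.
Qed.

Lemma Rsum_n_le (u v : nat -> R) n :
  (forall k, (k <= n)%nat -> u k <= v k) -> sum_n u n <= sum_n v n.
Proof.
  induction n as [|n IHn]; intros H.
  - rewrite !sum_O. apply H. lia.
  - rewrite !sum_Sn. apply Rplus_le_compat; [apply IHn; intros; apply H; lia | apply H; lia].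
Qed.

Lemma Rsum_n_nonneg (u : nat -> R) n : (forall k, 0 <= u k) -> 0 <= sum_n u n.
Proof.
  intros H. apply Rle_trans with (sum_n (fun _ => 0) n).
  - rewrite sum_n_const. lra.
  - apply Rsum_n_le. auto.
Qed.

Lemma Cmod_sum_n (u : nat -> C) n : Cmod (sum_n u n) <= sum_n (fun k => Cmod (u k)) n.
Proof.
  induction n as [|n IHn].
  - rewrite !sum_O. lra.
  - rewrite !sum_Sn. eapply Rle_trans; [apply Cmod_triangle|]. apply Rplus_le_compat_r, IHn.
Qed.

Lemma fmul_assoc a b c : fmul (fmul a b) c = fmul a (fmul b c).
Proof.
  apply functional_extensionality. intro n. unfold fmul.
  pose (F i j := Cmult (a i) (Cmult (b j) (c (n - (i + j))%nat))).
  transitivity (sum_n (fun m => sum_n (fun i => F i (m - i)%nat) m) n).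
  - apply sum_n_ext_loc. intros m Hm. rewrite <- sum_n_Cmult_r. apply sum_n_ext_loc. intros i Hi.
    unfold F. replace (n - (i + (m - i)))%nat with (n - m)%nat by lia. C_ring.
  - rewrite sum_n_triangle. apply sum_n_ext_loc. intros i Hi. rewrite <- sum_n_Cmult_l.
    apply sum_n_ext_loc. intros j Hj. unfold F. do 3 f_equal. lia.
Qed.

Lemma fmul_fone_l b : fmul fone b = b.
Proof.
  apply functional_extensionality. intro n. unfold fmul.
  rewrite (sum_n_single _ n 0) by (first [lia | intros [|k] _ Hk; [lia | apply Cmult_0_l]]).
  rewrite Nat.sub_0_r. apply Cmult_1_l.
Qed.

Lemma fmul_fone_r b : fmul b fone = b.
Proof.
  apply functional_extensionality. intro n. unfold fmul.
  rewrite (sum_n_single _ n n) by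
    (first [lia | intros k Hk Hne; destruct (n - k)%nat eqn:E; [lia | apply Cmult_0_r]]).
  rewrite Nat.sub_diag. apply Cmult_1_r.
Qed.

Lemma fpow_1 b : fpow b 1 = b.
Proof. apply fmul_fone_r. Qed.

Lemma fpow_add c i j : fpow c (i + j) = fmul (fpow c i) (fpow c j).
Proof.
  induction i as [|i IHi]; simpl.
  - now rewrite fmul_fone_l.
  - now rewrite IHi, fmul_assoc.
Qed.

Section SeriesWithoutConstantTerm.

Variable c : fps.
Hypothesis c0 : c 0%nat = RtoC 0.

Lemma fpow_coef_lt k n : (n < k)%nat -> fpow c k n = RtoC 0.
Proof.
  revert n. induction k as [|k IHk]; intros n Hn; [lia|]. simpl. unfold fmul.
  apply sum_n_zero. intros [|i] Hi.
  - rewrite c0. apply Cmult_0_l.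
  - rewrite IHk by lia. apply Cmult_0_r.
Qed.

Lemma fpow_coef_diag k : fpow c k k = pow_n (c 1%nat) k.
Proof.
  induction k as [|k IHk]; [reflexivity|]. simpl. unfold fmul.
  rewrite (sum_n_single _ (S k) 1).
  - now rewrite Nat.sub_succ, Nat.sub_0_r, IHk.
  - lia.
  - intros [|i] Hi Hne.
    + rewrite c0. apply Cmult_0_l.
    + rewrite fpow_coef_lt by lia. apply Cmult_0_r.
Qed.

Lemma fcomp_coef_sum_n a n M : (n <= M)%nat ->
  fcomp a c n = sum_n (fun k => Cmult (a k) (fpow c k n)) M.
Proof.
  intros HM. symmetry. apply sum_n_extend_zero; [exact HM|].
  intros k Hk. rewrite fpow_coef_lt by lia. apply Cmult_0_r.
Qed.

Lemma fcomp_fmul p q : fcomp (fmul p q) c = fmul (fcomp p c) (fcomp q c).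
Proof.
  apply functional_extensionality. intro n.
  pose (F i j := Cmult (Cmult (p i) (q j)) (fpow c (i + j) n)).
  transitivity (sum_n (fun i => sum_n (fun j => F i j) (n - i)) n).
  - rewrite <- sum_n_triangle. unfold fcomp, fmul at 1. apply sum_n_ext_loc. intros k Hk.
    rewrite <- sum_n_Cmult_r. apply sum_n_ext_loc. intros i Hi. unfold F.
    now replace (i + (k - i))%nat with k by lia.
  - unfold fmul at 1.
    transitivity (sum_n (fun m => sum_n (fun i => sum_n (fun j =>
       Cmult (Cmult (p i) (q j)) (Cmult (fpow c i m) (fpow c j (n - m)%nat))) n) n) n).
    + rewrite sum_n_switch. apply sum_n_ext_loc. intros i Hi. rewrite sum_n_switch.
      rewrite <- (sum_n_extend_zero _ (n - i) n) by
        (first [lia | intros j Hj; unfold F; rewrite fpow_coef_lt by lia; apply Cmult_0_r]).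
      apply sum_n_ext_loc. intros j Hj. unfold F. rewrite fpow_add. unfold fmul.
      now rewrite <- sum_n_Cmult_l.
    + apply sum_n_ext_loc. intros m Hm.
      rewrite (fcomp_coef_sum_n p m n), (fcomp_coef_sum_n q (n - m) n), sum_n_Cmult by lia.
      apply sum_n_ext. intro i. apply sum_n_ext. intro j. C_ring.
Qed.

Lemma fcomp_fpow b k : fcomp (fpow b k) c = fpow (fcomp b c) k.
Proof.
  induction k as [|k IHk]; simpl.
  - apply functional_extensionality. intro n. unfold fcomp.
    rewrite (sum_n_single _ n 0) by (first [lia | intros [|k] _ Hk; [lia | apply Cmult_0_l]]).
    apply Cmult_1_l.
  - now rewrite fcomp_fmul, IHk.
Qed.

End SeriesWithoutConstantTerm.

Lemma fcomp_assoc a b c : b 0%nat = RtoC 0 -> c 0%nat = RtoC 0 ->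
  fcomp (fcomp a b) c = fcomp a (fcomp b c).
Proof.
  intros b0 c0. apply functional_extensionality. intro n. unfold fcomp at 1.
  transitivity (sum_n (fun j => sum_n (fun k =>
    Cmult (a k) (Cmult (fpow b k j) (fpow c j n))) n) n).
  - apply sum_n_ext_loc. intros j Hj. rewrite (fcomp_coef_sum_n b b0 a j n Hj).
    rewrite <- sum_n_Cmult_r. apply sum_n_ext. intro k. C_ring.
  - rewrite sum_n_switch. unfold fcomp at 1. apply sum_n_ext_loc. intros k Hk.
    rewrite sum_n_Cmult_l, <- (fcomp_fpow c c0). reflexivity.
Qed.

Lemma fcomp_coef0 a b : fcomp a b 0%nat = a 0%nat.
Proof. unfold fcomp. rewrite sum_O. apply Cmult_1_r. Qed.

Lemma fcomp_coef1 a b : fcomp a b 1%nat = Cmult (a 1%nat) (b 1%nat).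
Proof. unfold fcomp. rewrite sum_Sn, sum_O, fpow_1. simpl. C_ring. Qed.

Lemma fpow_fid_coef k n : fpow fid k n = if Nat.eq_dec k n then RtoC 1 else RtoC 0.
Proof.
  revert n. induction k as [|k IHk]; intros [|n]; simpl fpow; try reflexivity; unfold fmul.
  - rewrite sum_O. apply Cmult_0_l.
  - rewrite (sum_n_single _ (S n) 1).
    + rewrite IHk, Nat.sub_succ, Nat.sub_0_r.
      destruct (Nat.eq_dec k n), (Nat.eq_dec (S k) (S n)); try lia; apply Cmult_1_l.
    + lia.
    + intros [|[|i]] Hi Hne; try lia; apply Cmult_0_l.
Qed.

Lemma fcomp_fid_r a : fcomp a fid = a.
Proof.
  apply functional_extensionality. intro n. unfold fcomp.
  rewrite (sum_n_single _ n n), fpow_fid_coef.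
  - destruct Nat.eq_dec; [apply Cmult_1_r | lia].
  - lia.
  - intros k Hk Hne. rewrite fpow_fid_coef. destruct Nat.eq_dec; [lia | apply Cmult_0_r].
Qed.

Lemma fcomp_fid_l c : c 0%nat = RtoC 0 -> fcomp fid c = c.
Proof.
  intros c0. apply functional_extensionality. intros [|n]; unfold fcomp.
  - rewrite sum_O, c0. apply Cmult_0_l.
  - rewrite (sum_n_single _ (S n) 1), fpow_1.
    + apply Cmult_1_l.
    + lia.
    + intros [|[|i]] Hi Hne; try lia; apply Cmult_0_l.
Qed.

Lemma pow_n_Cinv_l (x : C) n : x <> RtoC 0 -> Cmult (pow_n (Cinv x) n) (pow_n x n) = RtoC 1.
Proof.
  intros Hx. induction n as [|n IHn]; simpl; [apply Cmult_1_l|].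
  transitivity (Cmult (Cmult (Cinv x) x) (Cmult (pow_n (Cinv x) n) (pow_n x n))); [C_ring|].
  rewrite IHn, Cinv_l by exact Hx. apply Cmult_1_l.
Qed.

Lemma pow_n_neq_0 (x : C) n : x <> RtoC 0 -> pow_n x n <> RtoC 0.
Proof.
  intros Hx E. pose proof (pow_n_Cinv_l x n Hx) as H1.
  rewrite E, Cmult_0_r in H1. injection H1. lra.
Qed.

(** * Compositional inverses *)

(* The coefficient of degree n+1 of [fcomp b a] is
   [sum_{k<=n} b_k (a^k)_{n+1} + b_{n+1} a_1^{n+1}], so [fcomp b a = fid] can be
   solved for b degree by degree; [left_inv_upto a n] lists the first n+1 solutions. *)
Fixpoint left_inv_upto (a : fps) (n : nat) : nat -> C :=
  match n with
  | O => fun _ => RtoC 0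
  | S n' => fun j => if le_dec j n' then left_inv_upto a n' j
      else Cmult (Cminus (fid (S n'))
                         (sum_n (fun k => Cmult (left_inv_upto a n' k) (fpow a k (S n'))) n'))
                 (pow_n (Cinv (a 1%nat)) (S n'))
  end.

Definition left_inv (a : fps) : fps := fun j => left_inv_upto a j j.

Lemma left_inv_upto_stable a n j : (j <= n)%nat -> left_inv_upto a n j = left_inv a j.
Proof.
  induction n as [|n IHn]; intros Hj.
  - now replace j with 0%nat by lia.
  - destruct (Nat.eq_dec j (S n)) as [->|Hne]; [reflexivity|].
    simpl. destruct le_dec; [apply IHn | ]; lia.
Qed.

Lemma left_inv_S a n : left_inv a (S n) =
  Cmult (Cminus (fid (S n)) (sum_n (fun k => Cmult (left_inv a k) (fpow a k (S n))) n))
        (pow_n (Cinv (a 1%nat)) (S n)).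
Proof.
  unfold left_inv at 1. simpl. destruct le_dec; [lia|]. do 2 f_equal.
  apply sum_n_ext_loc. intros k Hk. now rewrite left_inv_upto_stable by lia.
Qed.

Lemma left_inv_spec a : is_fdiff a -> is_fdiff (left_inv a) /\ fcomp (left_inv a) a = fid.
Proof.
  intros [a0 a1]. split; [split; [reflexivity|] |].
  - assert (E : Cmult (left_inv a 1%nat) (a 1%nat) = RtoC 1).
    { rewrite left_inv_S, sum_O. change (left_inv a 0%nat) with (RtoC 0).
      change (fid 1%nat) with (RtoC 1).
      change (pow_n (Cinv (a 1%nat)) 1) with (Cmult (Cinv (a 1%nat)) (RtoC 1)).
      field. exact a1. }
    intro E0. rewrite E0, Cmult_0_l in E. injection E. lra.
  - apply functional_extensionality. intros [|n]; [now rewrite fcomp_coef0|].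
    unfold fcomp. rewrite sum_Sn, fpow_coef_diag, left_inv_S by exact a0.
    set (S0 := sum_n (fun k => Cmult (left_inv a k) (fpow a k (S n))) n).
    transitivity (Cplus S0 (Cmult (Cminus (fid (S n)) S0)
      (Cmult (pow_n (Cinv (a 1%nat)) (S n)) (pow_n (a 1%nat) (S n))))); [C_ring|].
    rewrite pow_n_Cinv_l by exact a1. C_ring.
Qed.

Lemma fdiff_inverse_exists a : is_fdiff a ->
  exists b, b 0%nat = RtoC 0 /\ fcomp a b = fid /\ fcomp b a = fid.
Proof.
  intros Ha. destruct (left_inv_spec a Ha) as [Hb Hba].
  destruct (left_inv_spec _ Hb) as [_ Hcb].
  assert (Hca : left_inv (left_inv a) = a).
  { rewrite <- (fcomp_fid_r (left_inv (left_inv a))), <- Hba,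
      <- fcomp_assoc, Hcb by apply Ha || apply Hb.
    apply fcomp_fid_l, Ha. }
  exists (left_inv a). split; [apply Hb|]. split; [|exact Hba].
  rewrite <- Hca at 1. exact Hcb.
Qed.

Lemma finv_spec a : is_fdiff a ->
  finv a 0%nat = RtoC 0 /\ fcomp a (finv a) = fid /\ fcomp (finv a) a = fid.
Proof. intros Ha. unfold finv. apply epsilon_spec, fdiff_inverse_exists, Ha. Qed.

Lemma finv_coef_S a n : is_fdiff a -> finv a (S n) =
  Cmult (Cminus (fid (S n)) (sum_n (fun k => Cmult (finv a k) (fpow a k (S n))) n))
        (pow_n (Cinv (a 1%nat)) (S n)).
Proof.
  intros Ha. destruct (finv_spec a Ha) as [_ [_ E]]. destruct Ha as [a0 a1].
  assert (E2 := f_equal (fun b => b (S n)) E). cbv beta in E2.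
  unfold fcomp in E2. rewrite sum_Sn, fpow_coef_diag in E2 by exact a0. rewrite <- E2.
  set (S0 := sum_n (fun k => Cmult (finv a k) (fpow a k (S n))) n).
  transitivity (Cmult (finv a (S n))
    (Cmult (pow_n (Cinv (a 1%nat)) (S n)) (pow_n (a 1%nat) (S n)))).
  - rewrite pow_n_Cinv_l by exact a1. C_ring.
  - C_ring.
Qed.

Lemma finv_coef1 a : is_fdiff a -> finv a 1%nat = Cinv (a 1%nat).
Proof.
  intros Ha. destruct (finv_spec a Ha) as [_ [_ E]].
  assert (E1 := f_equal (fun b => b 1%nat) E). cbv beta in E1.
  rewrite fcomp_coef1 in E1. change (fid 1%nat) with (RtoC 1) in E1.
  transitivity (Cmult (Cmult (finv a 1%nat) (a 1%nat)) (Cinv (a 1%nat))).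
  - field. apply Ha.
  - rewrite E1. apply Cmult_1_l.
Qed.

Lemma fconj_fdiff h g : is_fdiff h -> is_fdiff g ->
  is_fdiff (fconj h g) /\ fconj h g 1%nat = g 1%nat.
Proof.
  intros Hh Hg. unfold fconj.
  assert (E1 : fcomp (finv h) (fcomp g h) 1%nat = g 1%nat).
  { rewrite !fcomp_coef1, finv_coef1 by exact Hh. field. apply Hh. }
  split; [split|exact E1].
  - rewrite fcomp_coef0. apply (finv_spec h Hh).
  - rewrite E1. apply Hg.
Qed.

(** * Coefficients of words are polynomial in finitely many coefficients *)

(* [CEinv1] is a separate variable, instantiated by [Cinv (h 1)]: this keeps
   expressions polynomial in their variables. *)
Inductive cexpr :=
| CEconst (c : C)
| CEcoef (j : nat)
| CEinv1
| CEplus (e1 e2 : cexpr)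
| CEmult (e1 e2 : cexpr).

Fixpoint cexpr_eval (e : cexpr) (x : fps) (y : C) : C :=
  match e with
  | CEconst c => c
  | CEcoef j => x j
  | CEinv1 => y
  | CEplus e1 e2 => Cplus (cexpr_eval e1 x y) (cexpr_eval e2 x y)
  | CEmult e1 e2 => Cmult (cexpr_eval e1 x y) (cexpr_eval e2 x y)
  end.

Fixpoint cexpr_maxcoef (e : cexpr) : nat :=
  match e with
  | CEconst _ => 0%nat
  | CEcoef j => j
  | CEinv1 => 1%nat
  | CEplus e1 e2 | CEmult e1 e2 => Nat.max (cexpr_maxcoef e1) (cexpr_maxcoef e2)
  end.

Lemma cexpr_eval_agree e x x' y :
  (forall j, (j <= cexpr_maxcoef e)%nat -> x j = x' j) -> cexpr_eval e x y = cexpr_eval e x' y.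
Proof.
  induction e; simpl; intros H; try reflexivity.
  - apply H. lia.
  - rewrite IHe1, IHe2 by (intros; apply H; lia). reflexivity.
  - rewrite IHe1, IHe2 by (intros; apply H; lia). reflexivity.
Qed.

Definition coef_expr (F : fps -> C) : Prop :=
  exists e, forall h, is_fdiff h -> F h = cexpr_eval e h (Cinv (h 1%nat)).

Lemma coef_expr_ext F G : (forall h, is_fdiff h -> F h = G h) -> coef_expr G -> coef_expr F.
Proof. intros H [e He]. exists e. intros h Hh. rewrite H by exact Hh. auto. Qed.

Lemma coef_expr_const c : coef_expr (fun _ => c).
Proof. now exists (CEconst c). Qed.

Lemma coef_expr_coef j : coef_expr (fun h => h j).
Proof. now exists (CEcoef j). Qed.

Lemma coef_expr_inv1 : coef_expr (fun h => Cinv (h 1%nat)).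
Proof. now exists CEinv1. Qed.

Lemma coef_expr_plus F G : coef_expr F -> coef_expr G -> coef_expr (fun h => Cplus (F h) (G h)).
Proof.
  intros [e1 H1] [e2 H2]. exists (CEplus e1 e2). intros h Hh. simpl. now rewrite H1, H2.
Qed.

Lemma coef_expr_mult F G : coef_expr F -> coef_expr G -> coef_expr (fun h => Cmult (F h) (G h)).
Proof.
  intros [e1 H1] [e2 H2]. exists (CEmult e1 e2). intros h Hh. simpl. now rewrite H1, H2.
Qed.

Lemma coef_expr_minus F G : coef_expr F -> coef_expr G -> coef_expr (fun h => Cminus (F h) (G h)).
Proof.
  intros HF HG. apply (coef_expr_ext _ (fun h => Cplus (F h) (Cmult (RtoC (-1)) (G h)))).
  - intros h _. C_ring.
  - apply coef_expr_plus, coef_expr_mult; auto using coef_expr_const.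
Qed.

Lemma coef_expr_sum_n (F : nat -> fps -> C) n :
  (forall k, (k <= n)%nat -> coef_expr (F k)) -> coef_expr (fun h => sum_n (fun k => F k h) n).
Proof.
  induction n as [|n IHn]; intros H.
  - apply (coef_expr_ext _ (F 0%nat)); [intros; apply sum_O | apply H; lia].
  - apply (coef_expr_ext _ (fun h => Cplus (sum_n (fun k => F k h) n) (F (S n) h))).
    + intros h _. exact (sum_Sn (fun k => F k h) n).
    + apply coef_expr_plus; [apply IHn; intros; apply H | apply H]; lia.
Qed.

Lemma coef_expr_pow_n F n : coef_expr F -> coef_expr (fun h => pow_n (F h) n).
Proof.
  intros H. induction n as [|n IHn]; [exact (coef_expr_const (RtoC 1))|].
  exact (coef_expr_mult _ _ H IHn).
Qed.

Definition series_expr (A : fps -> fps) : Prop := forall j, coef_expr (fun h => A h j).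

Lemma series_expr_const a : series_expr (fun _ => a).
Proof. intros j. apply coef_expr_const. Qed.

Lemma series_expr_id : series_expr (fun h => h).
Proof. exact coef_expr_coef. Qed.

Lemma series_expr_fmul A B : series_expr A -> series_expr B -> series_expr (fun h => fmul (A h) (B h)).
Proof.
  intros HA HB n. apply (coef_expr_sum_n (fun k h => Cmult (A h k) (B h (n - k)%nat))).
  intros k _. apply coef_expr_mult; auto.
Qed.

Lemma series_expr_fpow B k : series_expr B -> series_expr (fun h => fpow (B h) k).
Proof.
  intros HB. induction k as [|k IHk]; [exact (series_expr_const fone)|].
  exact (series_expr_fmul _ _ HB IHk).
Qed.

Lemma series_expr_fcomp A B : series_expr A -> series_expr B -> series_expr (fun h => fcomp (A h) (B h)).
Proof.
  intros HA HB n. apply (coef_expr_sum_n (fun k h => Cmult (A h k) (fpow (B h) k n))).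
  intros k _. apply coef_expr_mult; [apply HA | apply (series_expr_fpow B k HB)].
Qed.

Lemma series_expr_finv X : series_expr X -> (forall h, is_fdiff h -> is_fdiff (X h)) ->
  coef_expr (fun h => Cinv (X h 1%nat)) -> series_expr (fun h => finv (X h)).
Proof.
  intros HX HF HI.
  enough (H : forall n k, (k <= n)%nat -> coef_expr (fun h => finv (X h) k)) by (intros j; exact (H j j (le_n j))).
  induction n as [|n IHn]; intros k Hk.
  - replace k with 0%nat by lia. apply (coef_expr_ext _ (fun _ => RtoC 0)); [|apply coef_expr_const].
    intros h Hh. apply (finv_spec _ (HF h Hh)).
  - destruct (Nat.eq_dec k (S n)) as [->|Hne]; [|apply IHn; lia].
    eapply coef_expr_ext; [intros h Hh; apply finv_coef_S, HF, Hh|].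
    apply coef_expr_mult; [|apply coef_expr_pow_n, HI].
    apply coef_expr_minus; [apply coef_expr_const|].
    apply (coef_expr_sum_n (fun k h => Cmult (finv (X h) k) (fpow (X h) k (S n)))).
    intros k' Hk'. apply coef_expr_mult; [apply IHn, Hk' | apply (series_expr_fpow X k' HX)].
Qed.

Lemma series_expr_weval_fconj f g w : is_fdiff g -> series_expr (fun h => weval w f (fconj h g)).
Proof.
  intros Hg.
  assert (Hconj : series_expr (fun h => fconj h g)).
  { apply (series_expr_fcomp (fun h => finv h) (fun h => fcomp g h)).
    - exact (series_expr_finv _ series_expr_id (fun h H => H) coef_expr_inv1).
    - exact (series_expr_fcomp _ _ (series_expr_const g) series_expr_id). }
  assert (Hconj_inv : series_expr (fun h => finv (fconj h g))).
  { apply series_expr_finv; [exact Hconj | intros h Hh; apply fconj_fdiff; auto |].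
    apply (coef_expr_ext _ (fun _ => Cinv (g 1%nat))); [|apply coef_expr_const].
    intros h Hh. now rewrite (proj2 (fconj_fdiff h g Hh Hg)). }
  induction w as [|x w IH]; [exact (series_expr_const fid)|].
  apply (series_expr_fcomp (fun h => lval f (fconj h g) x)); [|exact IH].
  destruct x; [exact (series_expr_const f) | exact (series_expr_const (finv f)) | |]; assumption.
Qed.

Inductive cpoly : (R -> C) -> Prop :=
| cpoly_const (c : C) : cpoly (fun _ => c)
| cpoly_horner (c : C) (p : R -> C) : cpoly p -> cpoly (fun t => Cplus c (Cmult (RtoC t) (p t))).

Lemma cpoly_ext p q : cpoly p -> (forall t, p t = q t) -> cpoly q.
Proof. intros H E. replace q with p; [exact H|]. now apply functional_extensionality. Qed.

Lemma cpoly_scal c p : cpoly p -> cpoly (fun t => Cmult c (p t)).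
Proof.
  induction 1 as [d|d p Hp IH]; [apply cpoly_const|].
  apply (cpoly_ext _ _ (cpoly_horner (Cmult c d) _ IH)). intros t. C_ring.
Qed.

Lemma cpoly_plus p q : cpoly p -> cpoly q -> cpoly (fun t => Cplus (p t) (q t)).
Proof.
  intros Hp. revert q. induction Hp as [c|c p Hp IH]; intros q Hq;
    destruct Hq as [d|d q Hq].
  - apply cpoly_const.
  - apply (cpoly_ext _ _ (cpoly_horner (Cplus c d) q Hq)). intros t. C_ring.
  - apply (cpoly_ext _ _ (cpoly_horner (Cplus c d) p Hp)). intros t. C_ring.
  - apply (cpoly_ext _ _ (cpoly_horner (Cplus c d) _ (IH q Hq))). intros t. C_ring.
Qed.

Lemma cpoly_mult p q : cpoly p -> cpoly q -> cpoly (fun t => Cmult (p t) (q t)).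
Proof.
  intros Hp. revert q. induction Hp as [c|c p Hp IH]; intros q Hq; [now apply cpoly_scal|].
  apply (cpoly_ext _ _ (cpoly_plus _ _ (cpoly_scal c q Hq) (cpoly_horner 0 _ (IH q Hq)))).
  intros t. C_ring.
Qed.

Lemma cpoly_pow_n p n : cpoly p -> cpoly (fun t => pow_n (p t) n).
Proof.
  intros H. induction n as [|n IHn]; [apply (cpoly_const 1)|].
  exact (cpoly_mult _ _ H IHn).
Qed.

Lemma cpoly_bounded p : cpoly p -> exists B, 0 <= B /\ forall t, 0 <= t <= 1 -> Cmod (p t) <= B.
Proof.
  induction 1 as [c|c p Hp IH].
  - exists (Cmod c). split; [apply Cmod_ge_0 | intros; lra].
  - destruct IH as [B [HB0 HB]]. exists (Cmod c + B). split; [pose proof (Cmod_ge_0 c); lra|].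
    intros t Ht. eapply Rle_trans; [apply Cmod_triangle|].
    rewrite Cmod_mult, Cmod_R, Rabs_pos_eq by lra.
    pose proof (HB t Ht). pose proof (Cmod_ge_0 (p t)). nra.
Qed.

Lemma Cmod_triangle_rev (c z : C) : Cmod c - Cmod z <= Cmod (Cplus c z).
Proof.
  pose proof (Cmod_triangle (Cplus c z) (Copp z)) as H. rewrite Cmod_opp in H.
  replace (Cplus (Cplus c z) (Copp z)) with c in H by C_ring. lra.
Qed.

(* Peel off factors of [t]; once the constant term is nonzero it dominates near 0. *)
Lemma cpoly_nonzero_near_0 p : cpoly p -> (exists s, p s <> RtoC 0) ->
  forall tau, 0 < tau -> exists t, 0 < t < tau /\ p t <> RtoC 0.
Proof.
  induction 1 as [c|c p Hp IH]; intros [s Hs] tau Htau.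
  - exists (tau / 2). split; [lra | exact Hs].
  - destruct (Ceq_dec c 0) as [->|Hc].
    + assert (Hps : p s <> RtoC 0) by (intro E; apply Hs; rewrite E; C_ring).
      destruct (IH (ex_intro _ s Hps) tau Htau) as [t [Ht Hpt]].
      exists t. split; [exact Ht|]. rewrite Cplus_0_l.
      apply Cmult_neq_0; [|exact Hpt]. intro E. injection E. lra.
    + destruct (cpoly_bounded p Hp) as [B [HB0 HB]].
      assert (Hcm : 0 < Cmod c) by (apply Cmod_gt_0; exact Hc).
      set (t := Rmin (tau/2) (Rmin (1/2) (Cmod c / (2 * (B + 1))))).
      assert (Ht0 : 0 < t) by (repeat apply Rmin_glb_lt; try lra; apply Rdiv_lt_0_compat; lra).
      assert (Ht1 : t <= tau/2) by apply Rmin_l.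
      assert (Ht2 : t <= 1/2) by (eapply Rle_trans; [apply Rmin_r | apply Rmin_l]).
      assert (Ht3 : t <= Cmod c / (2 * (B + 1))) by (eapply Rle_trans; [apply Rmin_r | apply Rmin_r]).
      assert (HtB : t * B < Cmod c).
      { apply Rle_lt_trans with (Cmod c / (2 * (B + 1)) * B); [apply Rmult_le_compat_r; lra|].
        apply Rmult_lt_reg_r with (2 * (B + 1)); [lra|].
        replace (Cmod c / (2 * (B + 1)) * B * (2 * (B + 1))) with (Cmod c * B) by (field; lra).
        nra. }
      exists t. split; [lra|]. intro E.
      pose proof (Cmod_triangle_rev c (Cmult (RtoC t) (p t))) as HR.
      rewrite E, Cmod_0, Cmod_mult, Cmod_R, Rabs_pos_eq in HR by lra.
      pose proof (HB t ltac:(lra)). pose proof (Cmod_ge_0 (p t)). nra.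
Qed.

Definition fline (g0 p : fps) (t : R) : fps := fun j => Cplus (g0 j) (Cmult (RtoC t) (p j)).

Lemma cpoly_fline_coef g0 p j : cpoly (fun t => fline g0 p t j).
Proof. exact (cpoly_horner (g0 j) (fun _ => p j) (cpoly_const (p j))). Qed.

Lemma cexpr_eval_fline_cpoly g0 p e : exists m psi, cpoly psi /\
  forall t, fline g0 p t 1%nat <> RtoC 0 ->
  Cmult (cexpr_eval e (fline g0 p t) (Cinv (fline g0 p t 1%nat))) (pow_n (fline g0 p t 1%nat) m)
  = psi t.
Proof.
  set (L t := fline g0 p t 1%nat).
  assert (HL : forall m, cpoly (fun t => pow_n (L t) m)) by (intros; apply cpoly_pow_n, cpoly_fline_coef).
  induction e as [c|j| |e1 IH1 e2 IH2|e1 IH1 e2 IH2]; simpl cexpr_eval.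
  - exists 0%nat, (fun _ => c). split; [apply cpoly_const|]. intros t _. apply Cmult_1_r.
  - exists 0%nat, (fun t => fline g0 p t j). split; [apply cpoly_fline_coef|]. intros t _. apply Cmult_1_r.
  - exists 1%nat, (fun _ => RtoC 1). split; [apply cpoly_const|]. intros t H.
    change (pow_n ?z 1) with (Cmult z (RtoC 1)). field. exact H.
  - destruct IH1 as [m1 [p1 [P1 H1]]], IH2 as [m2 [p2 [P2 H2]]].
    exists (m1 + m2)%nat, (fun t => Cplus (Cmult (p1 t) (pow_n (L t) m2)) (Cmult (p2 t) (pow_n (L t) m1))).
    split; [apply cpoly_plus; apply cpoly_mult; auto|].
    intros t Ht. unfold L. rewrite <- H1, <- H2, pow_n_plus by exact Ht. C_ring.
  - destruct IH1 as [m1 [p1 [P1 H1]]], IH2 as [m2 [p2 [P2 H2]]].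
    exists (m1 + m2)%nat, (fun t => Cmult (p1 t) (p2 t)). split; [apply cpoly_mult; auto|].
    intros t Ht. unfold L. rewrite <- H1, <- H2, pow_n_plus by exact Ht. C_ring.
Qed.

Lemma cexpr_fline_nonzero_near_0 e v g0 p :
  fline g0 p 1 1%nat <> RtoC 0 ->
  cexpr_eval e (fline g0 p 1) (Cinv (fline g0 p 1 1%nat)) <> v ->
  forall tau, 0 < tau -> exists t, 0 < t < tau /\ fline g0 p t 1%nat <> RtoC 0 /\
    cexpr_eval e (fline g0 p t) (Cinv (fline g0 p t 1%nat)) <> v.
Proof.
  intros H1 Hv tau Htau.
  destruct (cexpr_eval_fline_cpoly g0 p e) as [m [psi [Hpsi Epsi]]].
  pose (L t := fline g0 p t 1%nat).
  (* The last factor [L t] makes [Phi t <> 0] force [L t <> 0]. *)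
  pose (Phi t := Cmult (Cplus (psi t) (Cmult (Copp v) (pow_n (L t) m))) (L t)).
  assert (EPhi : forall t, L t <> RtoC 0 -> Phi t =
    Cmult (Cmult (Cminus (cexpr_eval e (fline g0 p t) (Cinv (L t))) v) (pow_n (L t) m)) (L t)).
  { intros t Ht. unfold Phi, L in *. rewrite <- Epsi by exact Ht. C_ring. }
  assert (Phi1 : Phi 1 <> RtoC 0).
  { rewrite EPhi by exact H1. apply Cmult_neq_0; [apply Cmult_neq_0|];
      [apply Cminus_eq_contra, Hv | apply pow_n_neq_0, H1 | exact H1]. }
  assert (HPhi : cpoly Phi).
  { apply cpoly_mult; [apply cpoly_plus; [exact Hpsi|] | apply cpoly_fline_coef].
    apply cpoly_scal, cpoly_pow_n, cpoly_fline_coef. }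
  destruct (cpoly_nonzero_near_0 Phi HPhi (ex_intro _ 1 Phi1) tau Htau) as [t [Ht HPt]].
  assert (HLt : L t <> RtoC 0) by (intro E; apply HPt; unfold Phi; rewrite E; C_ring).
  exists t. split; [exact Ht|]. split; [exact HLt|]. intro E.
  apply HPt. rewrite EPhi by exact HLt. unfold L. rewrite E. C_ring.
Qed.

Lemma Cplus_cont (a b : C) eps : 0 < eps -> exists eta, 0 < eta /\ forall a' b',
  Cmod (Cminus a' a) < eta -> Cmod (Cminus b' b) < eta -> Cmod (Cminus (Cplus a' b') (Cplus a b)) < eps.
Proof.
  intros He. exists (eps/2). split; [lra|]. intros a' b' H1 H2.
  replace (Cminus (Cplus a' b') (Cplus a b)) with (Cplus (Cminus a' a) (Cminus b' b)) by C_ring.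
  eapply Rle_lt_trans; [apply Cmod_triangle | lra].
Qed.

Lemma Cmult_cont (a b : C) eps : 0 < eps -> exists eta, 0 < eta /\ forall a' b',
  Cmod (Cminus a' a) < eta -> Cmod (Cminus b' b) < eta -> Cmod (Cminus (Cmult a' b') (Cmult a b)) < eps.
Proof.
  intros He. pose proof (Cmod_ge_0 a). pose proof (Cmod_ge_0 b).
  set (d := Rmin 1 (eps / (2 * (Cmod a + Cmod b + 1)))).
  assert (Hd0 : 0 < d) by (apply Rmin_glb_lt; [lra | apply Rdiv_lt_0_compat; lra]).
  assert (Hd1 : d <= 1) by apply Rmin_l.
  assert (Hd2 : d * (2 * (Cmod a + Cmod b + 1)) <= eps).
  { apply Rle_trans with (eps / (2 * (Cmod a + Cmod b + 1)) * (2 * (Cmod a + Cmod b + 1))).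
    - apply Rmult_le_compat_r; [lra | apply Rmin_r].
    - right. field. lra. }
  exists d. split; [exact Hd0|]. intros a' b' H1 H2.
  replace (Cminus (Cmult a' b') (Cmult a b)) with (Cplus (Cmult (Cminus a' a) (Cminus b' b))
    (Cplus (Cmult a (Cminus b' b)) (Cmult (Cminus a' a) b))) by C_ring.
  eapply Rle_lt_trans; [apply Cmod_triangle|].
  eapply Rle_lt_trans; [apply Rplus_le_compat_l, Cmod_triangle|].
  rewrite !Cmod_mult.
  pose proof (Cmod_ge_0 (Cminus a' a)). pose proof (Cmod_ge_0 (Cminus b' b)).
  assert (Cmod (Cminus a' a) * Cmod (Cminus b' b) <= d * d) by (apply Rmult_le_compat; lra).
  assert (Cmod a * Cmod (Cminus b' b) <= Cmod a * d) by (apply Rmult_le_compat_l; lra).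
  assert (Cmod (Cminus a' a) * Cmod b <= d * Cmod b) by (apply Rmult_le_compat_r; lra).
  assert (d * d <= d) by nra.
  assert (Cmod a * d + d * Cmod b + d < d * (2 * (Cmod a + Cmod b + 1))) by nra.
  nra.
Qed.

Lemma Cinv_cont (z : C) eps : z <> RtoC 0 -> 0 < eps -> exists eta, 0 < eta /\ forall z',
  Cmod (Cminus z' z) < eta -> Cmod (Cminus (Cinv z') (Cinv z)) < eps.
Proof.
  intros Hz He. assert (Hm : 0 < Cmod z) by (apply Cmod_gt_0; exact Hz).
  set (d := Rmin (Cmod z / 2) (eps * (Cmod z * Cmod z) / 2)).
  assert (Hd0 : 0 < d) by
    (apply Rmin_glb_lt; [lra | apply Rdiv_lt_0_compat; [apply Rmult_lt_0_compat; nra | lra]]).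
  assert (Hd1 : d <= Cmod z / 2) by apply Rmin_l.
  assert (Hd2 : d <= eps * (Cmod z * Cmod z) / 2) by apply Rmin_r.
  exists d. split; [exact Hd0|]. intros z' H.
  assert (Hz' : Cmod z / 2 <= Cmod z').
  { pose proof (Cmod_triangle_rev z (Cminus z' z)) as T.
    replace (Cplus z (Cminus z' z)) with z' in T by C_ring. lra. }
  assert (Hz'0 : z' <> RtoC 0) by (apply Cmod_gt_0; lra).
  replace (Cminus (Cinv z') (Cinv z)) with (Cmult (Copp (Cminus z' z)) (Cinv (Cmult z' z)))
    by (field; auto).
  rewrite Cmod_mult, Cmod_opp, Cmod_inv, Cmod_mult by (apply Cmult_neq_0; auto).
  apply Rmult_lt_reg_r with (Cmod z' * Cmod z); [nra|].
  rewrite Rmult_assoc, Rinv_l, Rmult_1_r by nra. nra.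
Qed.

Lemma cexpr_eval_cont e x y eps : 0 < eps -> exists eta, 0 < eta /\ forall x' y',
  (forall j, (j <= cexpr_maxcoef e)%nat -> Cmod (Cminus (x' j) (x j)) < eta) ->
  Cmod (Cminus y' y) < eta -> Cmod (Cminus (cexpr_eval e x' y') (cexpr_eval e x y)) < eps.
Proof.
  revert eps. induction e as [c|j| |e1 IH1 e2 IH2|e1 IH1 e2 IH2]; intros eps He; simpl.
  - exists 1. split; [lra|]. intros. replace (Cminus c c) with (RtoC 0) by C_ring. rewrite Cmod_0. lra.
  - exists eps. split; [lra|]. intros x' y' H _. apply H. lia.
  - exists eps. split; [lra|]. intros x' y' _ H. exact H.
  - destruct (Cplus_cont (cexpr_eval e1 x y) (cexpr_eval e2 x y) eps He) as [d [Hd Hc]].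
    destruct (IH1 d Hd) as [d1 [Hd1 H1]], (IH2 d Hd) as [d2 [Hd2 H2]].
    exists (Rmin d1 d2). split; [now apply Rmin_glb_lt|]. intros x' y' Hx Hy.
    pose proof (Rmin_l d1 d2). pose proof (Rmin_r d1 d2).
    apply Hc; [apply H1 | apply H2]; try (intros j Hj; specialize (Hx j ltac:(lia))); lra.
  - destruct (Cmult_cont (cexpr_eval e1 x y) (cexpr_eval e2 x y) eps He) as [d [Hd Hc]].
    destruct (IH1 d Hd) as [d1 [Hd1 H1]], (IH2 d Hd) as [d2 [Hd2 H2]].
    exists (Rmin d1 d2). split; [now apply Rmin_glb_lt|]. intros x' y' Hx Hy.
    pose proof (Rmin_l d1 d2). pose proof (Rmin_r d1 d2).
    apply Hc; [apply H1 | apply H2]; try (intros j Hj; specialize (Hx j ltac:(lia))); lra.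
Qed.

(** * Cauchy's estimate *)

Lemma is_series_C_unique (a : nat -> C) l1 l2 : is_series a l1 -> is_series a l2 -> l1 = l2.
Proof. intros H1 H2. exact (filterlim_locally_unique _ _ _ H1 H2). Qed.

Lemma is_series_Cmod_le (a : nat -> C) l B :
  is_series a l -> (forall n, Cmod (sum_n a n) <= B) -> Cmod l <= B.
Proof.
  intros H HB.
  assert (L : is_lim_seq (fun n => Cmod (sum_n a n)) (Cmod l)).
  { change (filterlim (fun n => norm (sum_n a n)) eventually (locally (norm l))).
    eapply filterlim_comp; [exact H | apply filterlim_norm]. }
  exact (is_lim_seq_le _ _ _ _ HB L (is_lim_seq_const B)).
Qed.

Lemma is_series_finite {K : AbsRing} {V : NormedModule K} (a : nat -> V) N :
  (forall l, (N < l)%nat -> a l = zero) -> is_series a (sum_n a N).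
Proof.
  intros H. apply (filterlim_ext_loc (fun _ => sum_n a N)); [|apply filterlim_const].
  exists N. intros n Hn. induction n as [|n IHn].
  - now replace N with 0%nat by lia.
  - destruct (Nat.eq_dec N (S n)) as [->|Hne]; [reflexivity|].
    rewrite sum_Sn, <- IHn, H, plus_zero_r by lia. reflexivity.
Qed.

Lemma is_series_sum_n (a : nat -> nat -> C) (L : nat -> C) N :
  (forall s, (s <= N)%nat -> is_series (a s) (L s)) ->
  is_series (fun l => sum_n (fun s => a s l) N) (sum_n L N).
Proof.
  induction N as [|N IHN]; intros H.
  - rewrite sum_O. apply (is_series_ext (a 0%nat)); [intros; now rewrite sum_O | apply H; lia].
  - rewrite sum_Sn. apply (is_series_ext (fun l => plus (sum_n (fun s => a s l) N) (a (S N) l))).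
    + intros. now rewrite sum_Sn.
    + apply (@is_series_plus C_AbsRing C_NormedModule); [apply IHN; intros |]; apply H; lia.
Qed.

Lemma is_series_terms_bounded (a : nat -> C) l :
  is_series a l -> exists K, 0 <= K /\ forall n, Cmod (a n) <= K.
Proof.
  intros H. destruct (filterlim_bounded (sum_n a) (ex_intro _ l H)) as [M HM].
  change (forall n, Cmod (sum_n a n) <= M) in HM.
  assert (M0 : 0 <= M) by (eapply Rle_trans; [apply Cmod_ge_0 | apply (HM 0%nat)]).
  exists (2 * M). split; [lra|]. intros [|n].
  - rewrite <- sum_O. specialize (HM 0%nat). lra.
  - replace (a (S n)) with (Cminus (sum_n a (S n)) (sum_n a n)) by (rewrite sum_Sn; C_ring).
    eapply Rle_trans; [apply Cmod_triangle|]. rewrite Cmod_opp.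
    pose proof (HM (S n)). pose proof (HM n). lra.
Qed.

Definition cis (t : R) : C := (cos t, sin t).

Lemma cis_add a b : Cmult (cis a) (cis b) = cis (a + b).
Proof. unfold cis, Cmult. simpl. rewrite cos_plus, sin_plus. f_equal; ring. Qed.

Lemma cis_pow_n t s : pow_n (cis t) s = cis (INR s * t).
Proof.
  induction s as [|s IHs].
  - unfold cis. simpl. now rewrite Rmult_0_l, cos_0, sin_0.
  - change (pow_n (cis t) (S s)) with (Cmult (cis t) (pow_n (cis t) s)).
    rewrite IHs, cis_add, S_INR. f_equal. ring.
Qed.

Lemma Cmod_cis t : Cmod (cis t) = 1.
Proof.
  unfold Cmod, cis. simpl. replace (cos t * (cos t * 1) + sin t * (sin t * 1)) with 1; [apply sqrt_1|].
  pose proof (sin2_cos2 t). unfold Rsqr in H. lra.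
Qed.

Lemma cis_2PI_mult k : cis (INR k * (2 * PI)) = RtoC 1.
Proof.
  unfold cis. replace (INR k * (2 * PI)) with (0 + 2 * INR k * PI) by ring.
  now rewrite cos_period, sin_period, cos_0, sin_0.
Qed.

Lemma cis_opp_eq_1 t : cis t = RtoC 1 -> cis (- t) = RtoC 1.
Proof.
  unfold cis. intros H. injection H. intros H1 H2. rewrite cos_neg, sin_neg, H1, H2.
  unfold RtoC. f_equal. ring.
Qed.

Lemma cis_neq_1 t : 0 < t < 2 * PI -> cis t <> RtoC 1.
Proof.
  intros Ht H. unfold cis in H. injection H. intros H1 H2.
  destruct (sin_eq_O_2PI_0 t ltac:(lra) ltac:(lra) H1) as [E|[E|E]]; try lra.
  rewrite E, cos_PI in H2. lra.
Qed.

Lemma sum_n_geom (u : C) m :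
  Cmult (sum_n (fun s => pow_n u s) m) (Cminus u 1) = Cminus (pow_n u (S m)) 1.
Proof.
  induction m as [|m IHm].
  - rewrite sum_O. change (pow_n u 0) with (RtoC 1). change (pow_n u 1) with (Cmult u 1). C_ring.
  - rewrite sum_Sn. change (plus ?x ?y) with (Cplus x y).
    transitivity (Cplus (Cmult (sum_n (fun s => pow_n u s) m) (Cminus u 1))
                        (Cmult (pow_n u (S m)) (Cminus u 1))); [C_ring|].
    rewrite IHm. change (pow_n u (S (S m))) with (Cmult u (pow_n u (S m))). C_ring.
Qed.

(* [root_sum d m'] = sum over the m-th roots of unity zeta of zeta^d, with m = m' + 1. *)
Definition root_sum (d : R) (m' : nat) : C :=
  sum_n (fun s => cis (INR s * (2 * PI * d / INR (S m')))) m'.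

Lemma root_sum_0 m' : root_sum 0 m' = RtoC (INR (S m')).
Proof.
  unfold root_sum. transitivity (sum_n (fun _ => RtoC 1) m').
  - apply sum_n_ext. intros s. replace (INR s * (2 * PI * 0 / INR (S m'))) with 0 by (unfold Rdiv; ring).
    unfold cis. now rewrite cos_0, sin_0.
  - induction m' as [|m' IHm']; [now rewrite sum_O|].
    rewrite sum_Sn, IHm', (S_INR (S m')). change (plus ?x ?y) with (Cplus x y).
    unfold RtoC, Cplus. simpl. f_equal; ring.
Qed.

Lemma root_sum_eq_0 (k : nat) m' d : (0 < k < S m')%nat -> d = INR k \/ d = - INR k ->
  root_sum d m' = RtoC 0.
Proof.
  intros Hk Hd. set (m := INR (S m')). assert (Hm : 0 < m) by (apply lt_0_INR; lia).
  assert (Hk1 : 0 < INR k) by (apply lt_0_INR; lia).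
  assert (Hk2 : INR k < m) by (apply lt_INR; lia).
  assert (Ht : 0 < 2 * PI * INR k / m < 2 * PI).
  { pose proof PI_RGT_0. split; [apply Rdiv_lt_0_compat; nra|].
    apply Rmult_lt_reg_r with m; [exact Hm|]. unfold Rdiv. rewrite Rmult_assoc, Rinv_l by lra. nra. }
  set (u := cis (2 * PI * d / m)).
  assert (Um : pow_n u (S m') = RtoC 1).
  { unfold u. rewrite cis_pow_n. fold m. destruct Hd as [-> | ->].
    - replace (m * (2 * PI * INR k / m)) with (INR k * (2 * PI)) by (field; lra). apply cis_2PI_mult.
    - replace (m * (2 * PI * - INR k / m)) with (- (INR k * (2 * PI))) by (field; lra).
      apply cis_opp_eq_1, cis_2PI_mult. }
  assert (U1 : u <> RtoC 1).
  { unfold u. destruct Hd as [-> | ->]; [now apply cis_neq_1|].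
    intro H. apply cis_opp_eq_1 in H. revert H.
    replace (- (2 * PI * - INR k / m)) with (2 * PI * INR k / m) by (field; lra).
    now apply cis_neq_1. }
  assert (E : root_sum d m' = sum_n (fun s => pow_n u s) m').
  { unfold root_sum. apply sum_n_ext. intros s. unfold u. now rewrite cis_pow_n. }
  pose proof (sum_n_geom u m') as G. rewrite Um in G. rewrite E.
  destruct (Ceq_dec (sum_n (fun s => pow_n u s) m') 0) as [Z|Z]; [exact Z|].
  exfalso. assert (Cminus 1 1 = RtoC 0) as E0 by C_ring. rewrite E0 in G. revert G.
  apply Cmult_neq_0; [exact Z | apply Cminus_eq_contra, U1].
Qed.

Lemma Cmod_root_sum_le d m' : Cmod (root_sum d m') <= INR (S m').
Proof.
  unfold root_sum. eapply Rle_trans; [apply Cmod_sum_n|].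
  rewrite <- (Rmult_1_r (INR (S m'))), <- sum_n_const. apply Rsum_n_le. intros. rewrite Cmod_cis. lra.
Qed.

Lemma pow_n_RtoC x n : pow_n (RtoC x) n = RtoC (x ^ n).
Proof.
  induction n as [|n IHn]; [reflexivity|].
  change (pow_n (RtoC x) (S n)) with (Cmult (RtoC x) (pow_n (RtoC x) n)).
  rewrite IHn. unfold RtoC, Cmult. simpl. f_equal; ring.
Qed.

Lemma pow_n_Cmult (a b : C) n : pow_n (Cmult a b) n = Cmult (pow_n a n) (pow_n b n).
Proof.
  induction n as [|n IHn]; [change (RtoC 1 = Cmult 1 1); C_ring|].
  change (Cmult (Cmult a b) (pow_n (Cmult a b) n) = Cmult (Cmult a (pow_n a n)) (Cmult b (pow_n b n))).
  rewrite IHn. C_ring.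
Qed.

Lemma Cmod_pow_n (z : C) n : Cmod (pow_n z n) = Cmod z ^ n.
Proof.
  induction n as [|n IHn]; [apply Cmod_1|].
  change (Cmod (Cmult z (pow_n z n)) = Cmod z * Cmod z ^ n). now rewrite Cmod_mult, IHn.
Qed.

Lemma Cmod_RtoC_nonneg x : 0 <= x -> Cmod (RtoC x) = x.
Proof. intros. rewrite Cmod_R. now apply Rabs_pos_eq. Qed.

Lemma geom_tail_le K q N n : 0 <= K -> 0 <= q < 1 ->
  sum_n (fun l => if lt_dec l N then 0 else K * q ^ l) n <= K * q ^ N / (1 - q).
Proof.
  intros HK Hq.
  assert (E : sum_n (fun l => if lt_dec l N then 0 else K * q ^ l) n =
    if lt_dec n N then 0 else K * (q ^ N - q ^ (S n)) / (1 - q)).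
  { induction n as [|n IHn].
    - rewrite sum_O. destruct (lt_dec 0 N); [reflexivity|].
      replace N with 0%nat by lia. simpl. field. lra.
    - rewrite sum_Sn. change (plus ?x ?y) with (x + y). rewrite IHn.
      destruct (lt_dec (S n) N), (lt_dec n N); try lia.
      + lra.
      + replace N with (S n) by lia. simpl. field. lra.
      + simpl. field. lra. }
  assert (0 < / (1 - q)) by (apply Rinv_0_lt_compat; lra).
  rewrite E. unfold Rdiv. destruct lt_dec.
  - apply Rmult_le_pos; [apply Rmult_le_pos; [exact HK | apply pow_le; lra] | lra].
  - apply Rmult_le_compat_r; [lra|]. apply Rmult_le_compat_l; [exact HK|].
    pose proof (pow_le q (S n) ltac:(lra)). lra.
Qed.

(* Integration is replaced by averaging over the m-th roots of unity on the circle
   of radius r/2: the average of [z^{-j} sum_l c_l z^l] retains exactly the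
   coefficients with l = j mod m, and those with l <> j are a geometric tail. *)
Section RootAverage.

Variables (c : fps) (r M K : R) (j m' : nat).
Hypothesis r_pos : 0 < r.
Hypothesis K_nonneg : 0 <= K.
Hypothesis c_ext : ext_disc c r.
Hypothesis c_bound : forall z l, Cmod z < r ->
  is_series (fun n => Cmult (c n) (pow_n z n)) l -> Cmod l <= M.
Hypothesis c_decay : forall n, Cmod (c n) * (r/2)^n <= K * (2/3)^n.
Hypothesis j_le : (j <= m')%nat.

Definition root_average_term (l : nat) : C :=
  Cmult (Cmult (c l) (RtoC ((r/2) ^ l))) (Cmult (RtoC (/ INR (S m'))) (root_sum (INR l - INR j) m')).

Lemma root_average_series : exists A, Cmod A <= M /\ is_series root_average_term A.
Proof.
  set (m := INR (S m')). assert (Hm : 0 < m) by (apply lt_0_INR; lia).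
  set (z s := Cmult (RtoC (r/2)) (cis (INR s * (2 * PI / m)))).
  assert (Hz : forall s, Cmod (z s) < r).
  { intros s. unfold z. rewrite Cmod_mult, Cmod_cis, Cmod_RtoC_nonneg by lra. lra. }
  set (F s := epsilon (inhabits (RtoC 0)) (is_series (fun n => Cmult (c n) (pow_n (z s) n)))).
  assert (HF : forall s, is_series (fun n => Cmult (c n) (pow_n (z s) n)) (F s)).
  { intros s. apply epsilon_spec, c_ext, Hz. }
  set (w s := Cmult (RtoC (/ m)) (cis (- INR s * (2 * PI * INR j / m)))).
  exists (sum_n (fun s => Cmult (w s) (F s)) m'). split.
  - eapply Rle_trans; [apply Cmod_sum_n|].
    apply Rle_trans with (sum_n (fun _ => / m * M) m').
    + apply Rsum_n_le. intros s _. unfold w.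
      rewrite !Cmod_mult, Cmod_cis, Cmod_RtoC_nonneg, Rmult_1_r by (apply Rlt_le, Rinv_0_lt_compat, Hm).
      apply Rmult_le_compat_l; [apply Rlt_le, Rinv_0_lt_compat, Hm | apply (c_bound (z s)); auto].
    + rewrite sum_n_const. fold m. right. field. lra.
  - eapply is_series_ext;
      [|apply is_series_sum_n; intros s _; apply (@is_series_scal C_AbsRing C_NormedModule), HF].
    intros l. unfold root_average_term, root_sum.
    rewrite <- sum_n_Cmult_l, <- sum_n_Cmult_l. apply sum_n_ext. intros s.
    unfold w, z. rewrite pow_n_Cmult, pow_n_RtoC, cis_pow_n. fold m.
    replace (INR s * (2 * PI * (INR l - INR j) / m)) with
      ((- INR s * (2 * PI * INR j / m)) + INR l * (INR s * (2 * PI / m))) by (field; lra).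
    rewrite <- cis_add. change (scal ?x ?y) with (Cmult x y). C_ring.
Qed.

Lemma root_average_term_bound l :
  Cmod (Cminus (root_average_term l)
                (if Nat.eq_dec l j then Cmult (c j) (RtoC ((r/2) ^ j)) else RtoC 0))
  <= if lt_dec l (j + S m') then 0 else K * (2/3) ^ l.
Proof.
  set (m := INR (S m')). assert (Hm : 0 < m) by (apply lt_0_INR; lia).
  unfold root_average_term. fold m.
  destruct (Nat.eq_dec l j) as [->|Hne].
  - destruct lt_dec; [|lia].
    rewrite Rminus_diag, root_sum_0. fold m.
    replace (Cminus _ _) with (RtoC 0); [rewrite Cmod_0; lra|].
    assert (E : Cmult (RtoC (/ m)) (RtoC m) = RtoC 1).
    { unfold RtoC, Cmult. simpl. f_equal; field; lra. }
    rewrite E. C_ring.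
  - destruct lt_dec.
    + rewrite (root_sum_eq_0 (if le_lt_dec l j then j - l else l - j) m').
      * replace (Cminus _ _) with (RtoC 0) by C_ring. rewrite Cmod_0. lra.
      * destruct le_lt_dec; lia.
      * destruct le_lt_dec; [right | left]; rewrite minus_INR by lia; ring.
    + replace (Cminus _ _) with (Cmult (Cmult (c l) (RtoC ((r/2) ^ l)))
        (Cmult (RtoC (/ m)) (root_sum (INR l - INR j) m'))) by C_ring.
      assert (0 < / m) by (apply Rinv_0_lt_compat, Hm).
      assert (0 <= (r/2) ^ l) by (apply pow_le; lra).
      rewrite !Cmod_mult, !Cmod_RtoC_nonneg by lra.
      assert (Hs : / m * Cmod (root_sum (INR l - INR j) m') <= 1).
      { apply Rle_trans with (/ m * m); [apply Rmult_le_compat_l; [lra | apply Cmod_root_sum_le]|].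
        right. field. lra. }
      pose proof (c_decay l). pose proof (Cmod_ge_0 (c l)).
      apply Rle_trans with (Cmod (c l) * (r/2) ^ l * 1); [apply Rmult_le_compat_l; [nra | exact Hs]|].
      lra.
Qed.

Lemma coef_le_root_average :
  Cmod (c j) * (r/2) ^ j <= M + K * (2/3) ^ (j + S m') / (1 - 2/3).
Proof.
  destruct root_average_series as [A [HA SA]].
  set (cj := Cmult (c j) (RtoC ((r/2) ^ j))).
  set (e l := if Nat.eq_dec l j then cj else RtoC 0).
  assert (He : is_series e cj).
  { replace cj with (sum_n e j).
    - apply (@is_series_finite C_AbsRing C_NormedModule). intros l Hl. unfold e. destruct Nat.eq_dec; [lia | reflexivity].
    - rewrite (sum_n_single _ j j); [unfold e; destruct Nat.eq_dec; [reflexivity | lia] | lia |].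
      intros k _ Hk. unfold e. destruct Nat.eq_dec; [lia | reflexivity]. }
  pose proof (@is_series_minus C_AbsRing C_NormedModule _ _ _ _ SA He) as HD.
  assert (HDb : Cmod (minus A cj) <= K * (2/3) ^ (j + S m') / (1 - 2/3)).
  { apply (is_series_Cmod_le _ _ _ HD). intros n. eapply Rle_trans; [apply Cmod_sum_n|].
    eapply Rle_trans; [|apply (geom_tail_le K (2/3) (j + S m') n); lra].
    apply Rsum_n_le. intros l _. apply root_average_term_bound. }
  assert (Ecj : Cmod cj = Cmod (c j) * (r/2) ^ j).
  { unfold cj. rewrite Cmod_mult, Cmod_RtoC_nonneg by (apply pow_le; lra). reflexivity. }
  pose proof (Cmod_triangle A (Copp (minus A cj))) as T.
  replace (Cplus A (Copp (minus A cj))) with cj in T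
    by (change (minus A cj) with (Cminus A cj); C_ring).
  rewrite Cmod_opp in T. lra.
Qed.

End RootAverage.

Lemma cauchy_estimate (c : fps) r eps : 0 < r -> norm_lt c r eps ->
  forall j, Cmod (c j) * (r/2)^j < eps.
Proof.
  intros Hr [Hext [M [HM HB]]] j.
  destruct (Hext (RtoC (3 * r / 4))) as [l0 Hl0]; [rewrite Cmod_RtoC_nonneg; lra|].
  destruct (is_series_terms_bounded _ _ Hl0) as [K [HK0 HK]].
  assert (Hdecay : forall n, Cmod (c n) * (r/2)^n <= K * (2/3)^n).
  { intros n. specialize (HK n).
    rewrite Cmod_mult, pow_n_RtoC, Cmod_RtoC_nonneg in HK by (apply pow_le; lra).
    replace (r / 2) with (3 * r / 4 * (2/3)) by field. rewrite Rpow_mult_distr, <- Rmult_assoc.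
    apply Rmult_le_compat_r; [apply pow_le; lra | exact HK]. }
  apply Rle_lt_trans with M; [|exact HM].
  apply Rnot_lt_le. intro Hlt. set (d := Cmod (c j) * (r / 2) ^ j - M).
  destruct (pow_lt_1_zero (2/3) ltac:(rewrite Rabs_pos_eq; lra) (d / (3 * (K + 1)))) as [N HN];
    [apply Rdiv_lt_0_compat; unfold d; lra|].
  pose proof (coef_le_root_average c r M K j (Nat.max N j) Hr HK0 Hext HB Hdecay ltac:(lia)) as Hc.
  specialize (HN (j + S (Nat.max N j))%nat ltac:(lia)).
  set (Q := (2/3) ^ (j + S (Nat.max N j))) in *.
  assert (0 <= Q) by (apply pow_le; lra).
  rewrite Rabs_pos_eq in HN by lra.
  assert (3 * (K + 1) * Q < d).
  { apply Rmult_lt_compat_l with (r := 3 * (K + 1)) in HN; [|lra].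
    replace (3 * (K + 1) * (d / (3 * (K + 1)))) with d in HN by (field; lra). lra. }
  assert (K * Q / (1 - 2/3) = 3 * K * Q) by field.
  unfold d in *. nra.
Qed.

(** * Openness and density in the analytic topology *)

Lemma fps_neq_coef (F G : fps) : F <> G -> exists n, F n <> G n.
Proof.
  intros H. apply NNPP. intro H'. apply H. apply functional_extensionality. intros n.
  apply NNPP. intro Hn. apply H'. now exists n.
Qed.

Lemma anball_center h r eps : 0 < eps -> anball h r eps h.
Proof.
  intros He.
  assert (Z : forall z, is_series (fun n => Cmult (fsub h h n) (pow_n z n)) (RtoC 0)).
  { intros z. replace (RtoC 0) with (sum_n (fun n => Cmult (fsub h h n) (pow_n z n)) 0).
    - apply (@is_series_finite C_AbsRing C_NormedModule). intros l _. unfold fsub. C_ring.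
    - rewrite sum_O. unfold fsub. C_ring. }
  split; [intros z _; exists (RtoC 0); apply Z|].
  exists 0. split; [exact He|]. intros z l _ Hl.
  rewrite (is_series_C_unique _ _ _ Hl (Z z)), Cmod_0. lra.
Qed.

Lemma anball_coef_close h k eps : anball h 1 eps k -> forall j, Cmod (Cminus (k j) (h j)) < eps * 2 ^ j.
Proof.
  intros Hb j. pose proof (cauchy_estimate _ _ _ Rlt_0_1 Hb j) as Cb.
  change (fsub k h j) with (Cminus (k j) (h j)) in Cb.
  replace (1 / 2) with (/ 2) in Cb by field. rewrite pow_inv in Cb.
  apply Rmult_lt_reg_r with (/ 2 ^ j); [apply Rinv_0_lt_compat, pow_lt; lra|].
  rewrite Rmult_assoc, Rinv_r, Rmult_1_r by (apply pow_nonzero; lra). exact Cb.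
Qed.

Lemma coef_expr_neq_nbhd F v h : coef_expr F -> is_fdiff h -> F h <> v ->
  exists eps, 0 < eps /\ forall k, is_fdiff k -> anball h 1 eps k -> F k <> v.
Proof.
  intros [e He] Hh Fh. rewrite He in Fh by exact Hh.
  set (dl := Cmod (Cminus (cexpr_eval e h (Cinv (h 1%nat))) v)).
  assert (Hdl : 0 < dl) by (apply Cmod_gt_0, Cminus_eq_contra, Fh).
  destruct (cexpr_eval_cont e h (Cinv (h 1%nat)) dl Hdl) as [eta [Heta Hcont]].
  destruct (Cinv_cont (h 1%nat) eta (proj2 Hh) Heta) as [eta' [Heta' Hinv]].
  set (D := Nat.max (cexpr_maxcoef e) 1).
  set (et := Rmin eta eta').
  assert (Het : 0 < et) by (apply Rmin_glb_lt; assumption).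
  assert (H2D : 0 < 2 ^ D) by (apply pow_lt; lra).
  exists (et / 2 ^ D). split; [apply Rdiv_lt_0_compat; assumption|].
  intros k Hk Hball Fk.
  assert (Hcl : forall j, (j <= D)%nat -> Cmod (Cminus (k j) (h j)) < et).
  { intros j Hj. eapply Rlt_le_trans; [apply anball_coef_close, Hball|].
    apply Rle_trans with (et / 2 ^ D * 2 ^ D).
    - apply Rmult_le_compat_l; [apply Rlt_le, Rdiv_lt_0_compat; assumption | apply Rle_pow; [lra | exact Hj]].
    - right. field. lra. }
  assert (Hk1 : Cmod (Cminus (k 1%nat) (h 1%nat)) < eta')
    by (eapply Rlt_le_trans; [apply Hcl; unfold D; lia | apply Rmin_r]).
  assert (Hclose : Cmod (Cminus (cexpr_eval e k (Cinv (k 1%nat))) (cexpr_eval e h (Cinv (h 1%nat)))) < dl).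
  { apply Hcont; [|apply Hinv, Hk1].
    intros j Hj. eapply Rlt_le_trans; [apply Hcl; unfold D; lia | apply Rmin_l]. }
  rewrite <- (He k Hk), Fk in Hclose. unfold dl in Hclose.
  replace (Cminus v (cexpr_eval e h (Cinv (h 1%nat))))
    with (Copp (Cminus (cexpr_eval e h (Cinv (h 1%nat))) v)) in Hclose by C_ring.
  rewrite Cmod_opp in Hclose. lra.
Qed.

Section FinitePerturbation.

Variables (g0 p : fps) (D : nat).
Hypothesis p_finite : forall j, (D < j)%nat -> p j = RtoC 0.

Lemma is_germ_fline t : is_germ g0 -> 0 <= t -> p 0%nat = RtoC 0 ->
  fline g0 p t 1%nat <> RtoC 0 -> is_germ (fline g0 p t).
Proof.
  intros [[g00 _] [r0 [Hr0 Hs0]]] Ht p0 Hk1. split.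
  - split; [|exact Hk1]. unfold fline. rewrite g00, p0. C_ring.
  - exists r0. split; [exact Hr0|].
    apply (@ex_series_le R_AbsRing R_CompleteNormedModule _
      (fun j => Cmod (g0 j) * r0 ^ j + t * (Cmod (p j) * r0 ^ j))).
    + intros j. change (norm ?x) with (Rabs x).
      pose proof (pow_le r0 j ltac:(lra)).
      rewrite Rabs_pos_eq by (apply Rmult_le_pos; [apply Cmod_ge_0 | lra]).
      pose proof (Cmod_triangle (g0 j) (Cmult (RtoC t) (p j))) as T.
      rewrite Cmod_mult, Cmod_R, Rabs_pos_eq in T by lra. unfold fline. nra.
    + apply (@ex_series_plus R_AbsRing R_NormedModule); [exact Hs0|].
      apply (@ex_series_scal R_AbsRing R_NormedModule).
      eexists. apply (@is_series_finite R_AbsRing R_NormedModule _ D).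
      intros l Hl. rewrite p_finite, Cmod_0 by exact Hl. apply Rmult_0_l.
Qed.

(* Moving along the polynomial direction [p] changes the sum on [B(r)] by at most
   [t * sum_{j <= D} |p_j| r^j]. *)
Lemma anball_fline f r eps : 0 < r -> anball f r eps g0 ->
  exists t0, 0 < t0 /\ forall t, 0 <= t < t0 -> anball f r eps (fline g0 p t).
Proof.
  intros Hr [Hext [M [HM HB]]].
  set (B := sum_n (fun j => Cmod (p j) * r ^ j) D).
  assert (HB0 : 0 <= B).
  { apply Rsum_n_nonneg. intros. apply Rmult_le_pos; [apply Cmod_ge_0 | apply pow_le; lra]. }
  exists ((eps - M) / (B + 1)). split; [apply Rdiv_lt_0_compat; lra|]. intros t Ht.
  assert (HtB : t * B < eps - M).
  { apply Rle_lt_trans with (t * (B + 1)); [nra|].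
    apply Rmult_lt_reg_r with (/ (B + 1)); [apply Rinv_0_lt_compat; lra|].
    rewrite Rmult_assoc, Rinv_r, Rmult_1_r by lra. exact (proj2 Ht). }
  set (q z j := Cmult (Cmult (RtoC t) (p j)) (pow_n z j)).
  assert (Hq : forall z, is_series (q z) (sum_n (q z) D)).
  { intros z. apply (@is_series_finite C_AbsRing C_NormedModule). intros l Hl.
    unfold q. rewrite p_finite by exact Hl. C_ring. }
  assert (Hsplit : forall z l1, is_series (fun j => Cmult (fsub g0 f j) (pow_n z j)) l1 ->
    is_series (fun j => Cmult (fsub (fline g0 p t) f j) (pow_n z j)) (plus l1 (sum_n (q z) D))).
  { intros z l1 H1. apply (is_series_ext (fun j => plus (Cmult (fsub g0 f j) (pow_n z j)) (q z j))).
    - intros j. unfold q, fsub, fline. C_ring.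
    - apply (@is_series_plus C_AbsRing C_NormedModule); [exact H1 | apply Hq]. }
  split.
  - intros z Hz. destruct (Hext z Hz) as [l1 Hl1]. eexists. apply Hsplit, Hl1.
  - exists (M + t * B). split; [lra|]. intros z l Hz Hl.
    destruct (Hext z Hz) as [l1 Hl1].
    rewrite (is_series_C_unique _ _ _ Hl (Hsplit z l1 Hl1)).
    eapply Rle_trans; [apply Cmod_triangle|]. apply Rplus_le_compat; [apply (HB z); assumption|].
    eapply Rle_trans; [apply Cmod_sum_n|]. unfold B.
    replace (t * sum_n (fun j => Cmod (p j) * r ^ j) D)
      with (sum_n (fun j => t * (Cmod (p j) * r ^ j)) D)
      by exact (sum_n_mult_l t (fun j => Cmod (p j) * r ^ j) D).
    apply Rsum_n_le. intros j _. unfold q.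
    rewrite !Cmod_mult, Cmod_R, Rabs_pos_eq, Cmod_pow_n by lra.
    assert (Cmod z ^ j <= r ^ j) by (apply pow_incr; split; [apply Cmod_ge_0 | lra]).
    pose proof (Cmod_ge_0 (p j)).
    rewrite Rmult_assoc. apply Rmult_le_compat_l; [lra|]. apply Rmult_le_compat_l; assumption.
Qed.

End FinitePerturbation.

(* Join [g0] to the truncation of [hh] at the degree read by the expression: the
   expression is nonzero at [hh], hence at arbitrarily small [t] on the segment. *)
Lemma coef_expr_neq_dense F v : coef_expr F -> (exists hh, is_fdiff hh /\ F hh <> v) ->
  an_dense (fun h => F h <> v).
Proof.
  intros [e He] [hh [Hhh Fhh]] U HU [g0 [Hg0 Ug0]].
  destruct (HU g0 Hg0 Ug0) as [f [r [eps [_ [Hr [_ [Hball Hsub]]]]]]].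
  set (D := Nat.max (cexpr_maxcoef e) 1).
  set (p j := if le_dec 1 j then if le_dec j D then Cminus (hh j) (g0 j) else RtoC 0 else RtoC 0).
  assert (p_finite : forall j, (D < j)%nat -> p j = RtoC 0).
  { intros j Hj. unfold p. destruct le_dec; [destruct le_dec; [lia|]|]; reflexivity. }
  assert (p0 : p 0%nat = RtoC 0) by reflexivity.
  assert (Hline1 : forall j, (j <= D)%nat -> fline g0 p 1 j = hh j).
  { intros j Hj. unfold fline, p. destruct le_dec as [Hj1|Hj1].
    - destruct le_dec; [C_ring | lia].
    - replace j with 0%nat by lia. rewrite (proj1 (proj1 Hg0)), (proj1 Hhh). C_ring. }
  assert (Hl1 : fline g0 p 1 1%nat = hh 1%nat) by (apply Hline1; unfold D; lia).
  assert (Ev1 : cexpr_eval e (fline g0 p 1) (Cinv (fline g0 p 1 1%nat)) <> v).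
  { rewrite Hl1, (cexpr_eval_agree e _ hh) by (intros; apply Hline1; unfold D; lia).
    rewrite <- He by exact Hhh. exact Fhh. }
  destruct (anball_fline g0 p D p_finite f r eps Hr Hball) as [t0 [Ht0 Hnear]].
  destruct (cexpr_fline_nonzero_near_0 e v g0 p ltac:(rewrite Hl1; apply Hhh) Ev1 t0 Ht0)
    as [t [Ht [Hk1 Hkv]]].
  assert (Hk : is_germ (fline g0 p t)) by exact (is_germ_fline g0 p D p_finite t Hg0 ltac:(lra) p0 Hk1).
  exists (fline g0 p t). split; [exact Hk|]. split.
  - apply Hsub; [exact Hk | apply Hnear; lra].
  - rewrite He by apply Hk. exact Hkv.
Qed.

Lemma weval_fconj_neq_open f g w : is_fdiff g -> an_open (fun h => weval w f (fconj h g) <> fid).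
Proof.
  intros Hg h Hh Uh.
  destruct (fps_neq_coef _ _ Uh) as [n Hn].
  destruct (coef_expr_neq_nbhd _ _ h (series_expr_weval_fconj f g w Hg n) (proj1 Hh) Hn)
    as [eps [Heps Hnear]].
  exists h, 1, eps. split; [exact Hh|]. split; [lra|]. split; [exact Heps|].
  split; [apply anball_center, Heps|].
  intros k Hk Hball E. apply (Hnear k (proj1 Hk) Hball). now rewrite E.
Qed.

Lemma weval_fconj_neq_dense f g w : is_fdiff g ->
  (exists hh, is_fdiff hh /\ weval w f (fconj hh g) <> fid) ->
  an_dense (fun h => weval w f (fconj h g) <> fid).
Proof.
  intros Hg [hh [Hhh Uhh]] U HU HU0.
  destruct (fps_neq_coef _ _ Uhh) as [n Hn].
  destruct (coef_expr_neq_dense _ (fid n) (series_expr_weval_fconj f g w Hg n)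
    (ex_intro _ hh (conj Hhh Hn)) U HU HU0) as [h [Hh [Uh Fh]]].
  exists h. split; [exact Hh|]. split; [exact Uh|]. intro E. apply Fh. now rewrite E.
Qed.

Theorem theorem2p5 :
  forall (f g : fps) (w : list letter),
    is_germ f -> is_germ g -> f <> fid -> g <> fid ->
    w <> nil -> reduced w ->
    (exists hh : fps, is_fdiff hh /\ weval w f (fconj hh g) <> fid) ->
    (exists h : fps, is_germ h /\ weval w f (fconj h g) <> fid) /\
    an_open (fun h => weval w f (fconj h g) <> fid) /\
    an_dense (fun h => weval w f (fconj h g) <> fid).
Proof.
  intros f g w Hf [Hg _] _ _ _ _ Hhh.
  pose proof (weval_fconj_neq_dense f g w Hg Hhh) as Hdense.
  split; [|split; [apply weval_fconj_neq_open, Hg | exact Hdense]].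
  destruct (Hdense (fun _ => True)) as [h [Hh [_ Uh]]].
  - intros g' Hg' _. exists g', 1, 1. split; [exact Hg'|]. do 2 (split; [lra|]).
    split; [apply anball_center; lra | trivial].
  - now exists f.
  - now exists h.
Qed.
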